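(* For every integer $n\ge 4$, $\mathrm{mob}(L(K_n))=n-2$.
   Context: $L(K_n)$ is the line graph of the complete graph $K_n$: its vertices are the edges of $K_n$, two being adjacent iff they share an endpoint. A set $S$ of vertices is a general position set if no three distinct vertices of $S$ lie on a common shortest path. Place one robot on each vertex of a general position set $S$; robots move one at a time, and a move is legal if a robot moves to an adjacent unoccupied vertex and the new set of occupied vertices is again a general position set. $S$ is a mobile general position set if some finite sequence of legal moves results in every vertex being occupied by some robot at some moment. $\mathrm{mob}$ of a graph is the maximum cardinality of a mobile general position set of it. *)

From mathcomp Require Import all_boot.
Set Implicit Arguments. Unset Strict Implicit. Unset Printing Implicit Defensive.

(* [p] (read as the walk x :: p) is a shortest path from x to [last x p]:
   it is an e-walk and no e-walk from x to the same endpoint is shorter. *)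
Definition shortest_path (T : finType) (e : rel T) (x : T) (p : seq T) : Prop :=
  path e x p /\
  forall q : seq T, path e x q -> last x q = last x p -> size p <= size q.

Definition on_common_geodesic (T : finType) (e : rel T) (u v w : T) : Prop :=
  exists (x : T) (p : seq T),
    shortest_path e x p /\ u \in x :: p /\ v \in x :: p /\ w \in x :: p.

Definition gp_set (T : finType) (e : rel T) (S : {set T}) : Prop :=
  forall u v w : T, u \in S -> v \in S -> w \in S ->
    u != v -> v != w -> u != w -> ~ on_common_geodesic e u v w.

Definition legal_move (T : finType) (e : rel T) (S S' : {set T}) : Prop :=
  exists u v : T, [/\ u \in S, v \notin S, e u v,
                      S' = v |: (S :\ u) & gp_set e S'].

Fixpoint legal_seq (T : finType) (e : rel T) (S : {set T}) (s : seq {set T})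
  : Prop :=
  match s with
  | [::] => True
  | S' :: s' => legal_move e S S' /\ legal_seq e S' s'
  end.

Definition mobile_gp_set (T : finType) (e : rel T) (S : {set T}) : Prop :=
  gp_set e S /\
  exists s : seq {set T}, legal_seq e S s /\
    forall x : T, exists2 C, C \in S :: s & x \in C.

Definition mob_eq (T : finType) (e : rel T) (k : nat) : Prop :=
  (exists S : {set T}, mobile_gp_set e S /\ #|S| = k) /\
  (forall S : {set T}, mobile_gp_set e S -> #|S| <= k).

(* The line graph L(K_n): vertices are the 2-element subsets of 'I_n
   (edges of K_n), adjacent iff distinct and sharing an endpoint. *)
Definition LKn_vertex (n : nat) := {A : {set 'I_n} | #|A| == 2}.

Definition LKn_adj (n : nat) : rel (LKn_vertex n) :=
  fun A B => (val A != val B) && (val A :&: val B != set0).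

From mathcomp Require Import all_boot zify.
Set Implicit Arguments. Unset Strict Implicit. Unset Printing Implicit Defensive.

(* A set of vertices of L(K_n) is a graph H on n points.  As L(K_n) has
   diameter 2, a set is in general position iff H contains no path on four
   vertices.  Lower bound: the star at c without the edge cd is mobile; a
   robot can turn around c, and the whole star can move, leaf by leaf, from
   centre c to centre d through double stars, so that every edge gets visited.
   Upper bound: no robot on a triangle of H can ever move without creating a
   path on four vertices, and visiting an edge from the triangle to a fourth
   point creates one too; so H is triangle-free, hence a forest of stars, and
   with n - 1 edges it is a spanning star, from which no robot can move. *)

Lemma exists_fresh (T : finType) (s : seq T) : size s < #|T| -> exists x, x \notin s.
Proof.
move=> small; have /card_gt0P[x]: 0 < #|[predC s]|.
  by rewrite -(ltn_add2l #|s|) cardC addn0 (leq_ltn_trans (card_size s)).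
by rewrite inE; exists x.
Qed.

Section Mobility.

Variables (T : finType) (e : rel T).

Lemma legal_seq_cat S s1 s2 :
  legal_seq e S s1 -> legal_seq e (last S s1) s2 -> legal_seq e S (s1 ++ s2).
Proof. by elim: s1 S => [|S1 s1 IH] S //= [mv l1] l2; split=> //; apply: IH. Qed.

Lemma legal_seq_inv (P : {set T} -> Prop) S s :
  (forall S1 S2, legal_move e S1 S2 -> P S1 -> P S2) ->
  legal_seq e S s -> P S -> forall C, C \in S :: s -> P C.
Proof.
move=> Pmove; elim: s S => [|S1 s IH] S /=; first by move=> _ PS C /[!inE] /eqP->.
case=> mv ls PS C /[1!in_cons] /orP[/eqP-> //|Cs].
exact: IH S1 ls (Pmove _ _ mv PS) C Cs.
Qed.

Lemma legal_seq_gp_set S s :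
  legal_seq e S s -> gp_set e S -> forall C, C \in S :: s -> gp_set e C.
Proof. by apply: legal_seq_inv => S1 S2 [u [v []]]. Qed.

Lemma mobile_frozen S :
  mobile_gp_set e S -> (forall S', ~ legal_move e S S') -> forall x, x \in S.
Proof.
case=> _ [[|S' s] [/= ls cover]] frozen x; last by case: ls => /frozen.
by have [C /[!inE] /eqP->] := cover x.
Qed.

Definition sweep (S S' : {set T}) (P : T -> Prop) :=
  exists s, [/\ legal_seq e S s, last S s = S' &
                forall x, P x -> exists2 C, C \in S :: s & x \in C].

Lemma sweep_refl S : sweep S S (fun x => x \in S).
Proof. by exists [::]; split=> // x xS; exists S; rewrite ?inE. Qed.

Lemma sweep_move S S' :
  legal_move e S S' -> sweep S S' (fun x => x \in S \/ x \in S').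
Proof.
by move=> mv; exists [:: S']; split=> // x [xS|xS'];
  [exists S | exists S']; rewrite ?inE ?eqxx ?orbT.
Qed.

Lemma sweep_weaken S S' (P Q : T -> Prop) :
  sweep S S' P -> (forall x, Q x -> P x) -> sweep S S' Q.
Proof. by move=> [s [ls ends cover]] QP; exists s; split=> // x /QP/cover. Qed.

Lemma sweep_trans S1 S2 S3 P Q :
  sweep S1 S2 P -> sweep S2 S3 Q -> sweep S1 S3 (fun x => P x \/ Q x).
Proof.
move=> [s1 [l1 e1 c1]] [s2 [l2 e2 c2]]; exists (s1 ++ s2); split.
- by apply: legal_seq_cat; rewrite ?e1.
- by rewrite last_cat e1.
have sub1 C : C \in S1 :: s1 -> C \in S1 :: s1 ++ s2.
  by rewrite !in_cons mem_cat => /orP[->|->]; rewrite ?orbT.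
have sub2 C : C \in S2 :: s2 -> C \in S1 :: s1 ++ s2.
  rewrite in_cons => /orP[/eqP->|Cs2]; last by rewrite in_cons mem_cat Cs2 !orbT.
  by apply: sub1; rewrite -e1 mem_last.
by move=> x [/c1 [C /sub1]|/c2 [C /sub2]]; exists C.
Qed.

Lemma sweep_loops (I : finType) S (P : I -> T -> Prop) :
  (forall i, sweep S S (P i)) -> sweep S S (fun x => exists i, P i x).
Proof.
move=> loops; suff: sweep S S (fun x => exists2 i, i \in enum I & P i x).
  by move/sweep_weaken; apply=> x [i Pix]; exists i; rewrite ?mem_enum.
elim: (enum I) => [|i s IH]; first by apply: sweep_weaken (sweep_refl S) _ => x [].
apply: sweep_weaken (sweep_trans (loops i) IH) _ => x [j].
by rewrite in_cons => /orP[/eqP<-|js Pjx]; [left | right; exists j].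
Qed.

End Mobility.

Section Geodesics.

Variables (T : finType) (e : rel T).

Definition P3_free (S : {set T}) :=
  forall x y z, x \in S -> y \in S -> z \in S ->
    e x y -> e y z -> x != z -> e x z.

Lemma path2_shortest x y z :
  e x y -> e y z -> x != z -> ~~ e x z -> shortest_path e x [:: y; z].
Proof.
move=> xy yz /negbTE xz /negbTE nxz; split; first by rewrite /= xy yz.
case=> [|z1 [|z2 q]] //=; first by move=> _ /eqP; rewrite xz.
by move=> /andP[xz1 _] z1z; rewrite z1z nxz in xz1.
Qed.

Hypothesis e_irrefl : irreflexive e.

Lemma gp_set_P3_free S : gp_set e S -> P3_free S.
Proof.
move=> gp x y z xS yS zS xy yz xz; apply/negPn/negP => nxz.
have neq a b : e a b -> a != b by apply: contraTneq => ->; rewrite e_irrefl.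
apply: (gp x y z xS yS zS (neq _ _ xy) (neq _ _ yz) xz).
by exists x, [:: y; z]; rewrite !inE !eqxx ?orbT; split; first exact: path2_shortest.
Qed.

Hypothesis e_diam2 : forall x z, x != z -> ~~ e x z -> exists2 y, e x y & e y z.

Lemma shortest_path_size x p : shortest_path e x p -> size p <= 2.
Proof.
case=> _ min; set z := last x p.
suff [q [pq qz sq]] : exists q, [/\ path e x q, last x q = z & size q <= 2].
  exact: leq_trans (min q pq qz) sq.
have [xz|nxz] := eqVneq x z; first by exists [::].
have [xz|nxz'] := boolP (e x z); first by exists [:: z]; rewrite /= xz.
by have [y xy yz] := e_diam2 nxz nxz'; exists [:: y; z]; rewrite /= xy yz.
Qed.

Lemma P3_free_gp_set S : P3_free S -> gp_set e S.
Proof.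
move=> P3 u v w uS vS wS uv vw uw [x [p [sp [ux [vx wx]]]]].
have uvw_uniq : uniq [:: u; v; w] by rewrite /= !inE negb_or uv uw vw.
have sub : {subset [:: u; v; w] <= x :: p}.
  by move=> t /[!inE] /or3P[]/eqP->.
have [size3 same] := uniq_min_size uvw_uniq sub (shortest_path_size sp).
have inS t : t \in x :: p -> t \in S by rewrite -same !inE => /or3P[]/eqP->.
have := uniq_size_uniq uvw_uniq same; rewrite -size3 eqxx.
case: p {ux vx wx sub} sp size3 same inS => [|y [|z []]] //.
move=> [/= /and3P[xy yz _] min] _ _ inS.
rewrite !inE negb_or => /andP[/andP[_ xz] _].
have nxz : ~~ e x z.
  by apply/negP => xz'; have := min [:: z]; rewrite /= xz' => /(_ isT erefl).
by rewrite (P3 x y z) ?inS ?inE ?eqxx ?orbT in nxz.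
Qed.

End Geodesics.

Section LineGraph.

Variable n : nat.
Local Notation V := (LKn_vertex n).
Local Notation adj := (@LKn_adj n).
Implicit Types (a b c d x y : 'I_n) (u v w : V) (S : {set V}).

Lemma card_vertex u : #|val u| = 2.
Proof. exact/eqP/(valP u). Qed.

Lemma vertex_eqE u w : (u == w) = (val u == val w).
Proof. by []. Qed.

Lemma vertex_pair u : exists a b, a != b /\ val u = [set a; b].
Proof. by case/cards2P: (valP u) => a [b [ab ->]]; exists a, b. Qed.

Lemma vertex_eq_pair u a b :
  a != b -> a \in val u -> b \in val u -> val u = [set a; b].
Proof.
move=> ab au bu; apply/esym/eqP; rewrite eqEcard cards2 ab card_vertex andbT.
by apply/subsetP=> x /[!inE] /orP[]/eqP->.
Qed.

Lemma vertex_other u a : a \in val u -> exists2 b, b != a & val u = [set a; b].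
Proof.
move=> au; have /card_gt0P[b]: 0 < #|val u :\ a|.
  by move: (card_vertex u); rewrite (cardsD1 a) au add1n => -[->].
by rewrite !inE => /andP[ba bu]; exists b => //; apply: vertex_eq_pair; rewrite // eq_sym.
Qed.

Lemma pair_card a b : a != b -> #|[set a; b]| == 2.
Proof. by rewrite cards2 => ->. Qed.

Definition kedge a b (ab : a != b) : V := exist _ [set a; b] (pair_card ab).

Lemma pair_neq a b c d : a \notin [set c; d] -> [set a; b] != [set c; d].
Proof. by apply: contra => /eqP<-; rewrite !inE eqxx. Qed.

Lemma pair_eqr a b x : a != x -> b != x -> ([set a; x] == [set b; x]) = (a == b).
Proof.
move=> ax bx; apply/eqP/eqP=> [E|->] //; have: a \in [set b; x] by rewrite -E !inE eqxx.
by rewrite !inE (negbTE ax) orbF => /eqP.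
Qed.

Lemma adj_pairs u w a b c d : val u = [set a; b] -> val w = [set c; d] ->
  adj u w = ([set a; b] != [set c; d]) && [|| a == c, a == d, b == c | b == d].
Proof.
rewrite /LKn_adj => -> ->; congr (_ && _); apply/set0Pn/idP => [[x]|].
  by rewrite !inE => /andP[/orP[]/eqP-> /orP[]/eqP->]; rewrite eqxx ?orbT.
by case/or4P=> /eqP->; [exists c|exists d|exists c|exists d]; rewrite !inE eqxx ?orbT.
Qed.

Lemma LKn_adj_irrefl : irreflexive adj.
Proof. by move=> u; rewrite /LKn_adj eqxx. Qed.

Lemma adj_share u w a b c :
  val u = [set a; b] -> val w = [set a; c] -> b != c -> adj u w.
Proof.
move=> ua wa bc; rewrite (adj_pairs ua wa) eqxx andbT.
have ba : b != a by move: (card_vertex u); rewrite ua cards2 eq_sym; case: (b != a).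
apply: contraNneq bc => E; have: b \in [set a; c] by rewrite -E !inE eqxx orbT.
by rewrite !inE (negbTE ba).
Qed.

Lemma LKn_diam2 u w : u != w -> ~~ adj u w -> exists2 v, adj u v & adj v w.
Proof.
have [a [b [ab ua]]] := vertex_pair u; have [c [d [cd wc]]] := vertex_pair w.
move=> uw; rewrite (adj_pairs ua wc) -ua -wc -vertex_eqE uw /=.
rewrite !negb_or => /and4P[ac ad bc _].
exists (kedge ac); first exact: adj_share ua _ bc.
by apply: (@adj_share _ _ c a d) => //; rewrite setUC.
Qed.

Lemma LKn_gp_setP S : gp_set adj S <-> P3_free adj S.
Proof.
split; first exact/gp_set_P3_free/LKn_adj_irrefl.
exact/P3_free_gp_set/LKn_diam2.
Qed.

(* [S] read as a graph on 'I_n: its edges are the vertices of L(K_n) in [S]. *)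
Definition has_edge S a b := [exists u in S, val u == [set a; b]].

Lemma has_edgeP S a b : reflect (exists2 u, u \in S & val u = [set a; b]) (has_edge S a b).
Proof.
apply: (iffP existsP) => [[u /andP[uS /eqP E]]|[u uS E]]; exists u => //.
by rewrite uS E eqxx.
Qed.

Lemma has_edgeC S a b : has_edge S a b = has_edge S b a.
Proof. by rewrite /has_edge setUC. Qed.

Lemma gp_set_P4_free S x a c b : gp_set adj S -> uniq [:: x; a; c; b] ->
  has_edge S x a -> has_edge S a c -> has_edge S c b -> False.
Proof.
move=> /LKn_gp_setP P3; rewrite /= !inE !negb_or.
move=> /and4P[/and3P[xa xc xb] /andP[ac ab] cb _].
move=> /has_edgeP[u1 u1S E1] /has_edgeP[u2 u2S E2] /has_edgeP[u3 u3S E3].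
have u1a : val u1 = [set a; x] by rewrite E1 setUC.
have u2c : val u2 = [set c; a] by rewrite E2 setUC.
have u13 : u1 != u3 by rewrite vertex_eqE E1 E3 pair_neq // !inE negb_or xc xb.
have := P3 u1 u2 u3 u1S u2S u3S (adj_share u1a E2 xc) (adj_share u2c E3 ab) u13.
by rewrite (adj_pairs E1 E3) (negbTE xc) (negbTE xb) (negbTE ac) (negbTE ab) andbF.
Qed.

End LineGraph.

Section Fans.

Variable n : nat.
Local Notation V := (LKn_vertex n).
Local Notation adj := (@LKn_adj n).
Implicit Types (a b c d g m x y : 'I_n) (u w : V) (X : {set 'I_n}) (f : 'I_n -> 'I_n).

(* The edges [f x]--[x] of K_n: each leaf [x] in [X] hangs on its centre [f x]. *)
Definition fan X f : {set V} := [set u | [exists x in X, val u == [set f x; x]]].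

Definition centred X f := {in X, forall x, f x \notin X}.

Lemma fanP X f u : reflect (exists2 x, x \in X & val u = [set f x; x]) (u \in fan X f).
Proof.
rewrite inE; apply: (iffP existsP) => [[x /andP[xX /eqP E]]|[x xX E]].
  by exists x.
by exists x; rewrite xX E eqxx.
Qed.

Lemma eq_fan X f f' : {in X, f =1 f'} -> fan X f = fan X f'.
Proof.
by move=> ff'; apply/setP=> u; apply/fanP/fanP=> -[x xX E]; exists x; rewrite // E ff'.
Qed.

Lemma centred_neq X f x : centred X f -> x \in X -> f x != x.
Proof. by move=> cXf xX; apply: contraNneq (cXf x xX) => ->. Qed.

Lemma fan_setI X f x : centred X f -> x \in X -> [set f x; x] :&: X = [set x].
Proof.
move=> cXf xX; apply/setP=> y; rewrite !inE andb_orl.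
have [->|yx] := eqVneq y x; first by rewrite xX orbT.
by rewrite orbF; apply: contraNF (cXf x xX) => /andP[/eqP<-].
Qed.

Lemma fan_leaf X f x y : centred X f -> x \in X -> y \in X ->
  [set f x; x] = [set f y; y] -> x = y.
Proof.
move=> cXf xX yX E; suff: y \in [set f x; x] :&: X by rewrite fan_setI // inE => /eqP.
by rewrite E !inE eqxx orbT yX.
Qed.

Lemma fan_adj_centre X f x y u w : centred X f -> x \in X -> y \in X ->
  val u = [set f x; x] -> val w = [set f y; y] -> adj u w -> f x = f y.
Proof.
move=> cXf xX yX ux wy; rewrite (adj_pairs ux wy) => /andP[neq].
have [fxy fyx] : f x != y /\ x != f y.
  by split; [apply: contraNneq (cXf x xX) => -> | apply: contraNneq (cXf y yX) => <-].
rewrite (negbTE fxy) (negbTE fyx) /= => /orP[/eqP //|/eqP xy].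
by rewrite xy eqxx in neq.
Qed.

Lemma fan_gp X f : centred X f -> gp_set adj (fan X f).
Proof.
move=> cXf; apply/LKn_gp_setP => u1 u2 u3.
move=> /fanP[x xX E1] /fanP[y yX E2] /fanP[z zX E3] a12 a23 u13.
have fxz : f z = f x.
  by rewrite -(fan_adj_centre cXf yX zX E2 E3 a23) (fan_adj_centre cXf xX yX E1 E2 a12).
apply: (adj_share E1 (_ : val u3 = [set f x; z])); first by rewrite E3 fxz.
by apply: contraNneq u13 => xz; apply/eqP/val_inj; rewrite E1 E3 xz.
Qed.

Lemma card_fan X f : centred X f -> #|fan X f| = #|X|.
Proof.
move=> cXf; pose leaf u := val u :&: X.
have leafE u :
    u \in fan X f -> exists2 x, x \in X & leaf u = [set x] /\ val u = [set f x; x].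
  by case/fanP=> x xX E; exists x; rewrite // /leaf E fan_setI.
have leaf_inj : {in fan X f &, injective leaf}.
  move=> u w /leafE[x xX [-> ux]] /leafE[y yX [-> wy]] /set1_inj xy.
  by apply/val_inj; rewrite ux wy xy.
rewrite -(card_in_imset leaf_inj).
suff -> : leaf @: fan X f = set1 @: X by rewrite card_imset //; apply: set1_inj.
apply/setP=> A; apply/imsetP/imsetP=> [[u /leafE[x xX [-> _]] ->]|[x xX ->]].
  by exists x.
exists (kedge (centred_neq cXf xX)); last by rewrite /leaf /= fan_setI.
by apply/fanP; exists x.
Qed.

Lemma fan_recentre X f x g : centred X f -> x \in X -> g \notin X -> g != f x ->
  legal_move adj (fan X f) (fan X (fun y => if y == x then g else f y)).
Proof.
move=> cXf xX gX gfx; set f' := fun y => _.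
have cXf' : centred X f' by move=> y yX; rewrite /f'; case: eqP => _; last exact: cXf.
have gx : g != x by apply: contraNneq gX => ->.
have fxx := centred_neq cXf xX.
exists (kedge fxx), (kedge gx); split.
- by apply/fanP; exists x.
- apply/fanP=> -[y yX /= E].
  have: y \in [set g; x] by rewrite E !inE eqxx orbT.
  rewrite !inE => /orP[/eqP yg|/eqP yx]; first by rewrite -yg yX in gX.
  by move: E; rewrite yx => /eqP; rewrite pair_eqr // (negbTE gfx).
- by apply: (@adj_share _ _ _ x (f x) g); rewrite /= 1?setUC // eq_sym.
- apply/setP=> u; rewrite in_setU1 in_setD1 !vertex_eqE /=.
  apply/fanP/idP=> [[y yX]|].
    rewrite /f'; case: eqP => [-> -> //|yx E]; first by rewrite eqxx.
    apply/orP; right; apply/andP; split; last by apply/fanP; exists y.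
    by rewrite E; apply/eqP => /(fan_leaf cXf yX xX).
  case/orP=> [/eqP E|/andP[ux /fanP[y yX E]]]; first by exists x; rewrite /f' ?eqxx.
  exists y; rewrite // /f'; case: eqP => // yx.
  by rewrite E yx eqxx in ux.
- exact: fan_gp.
Qed.

Definition star c m := fan (~: [set c; m]) (fun _ => c).

Lemma star_centred c m : centred (~: [set c; m]) (fun _ => c).
Proof. by move=> x _; rewrite !inE eqxx. Qed.

Lemma mem_star c m u : c != m -> (u \in star c m) = (c \in val u) && (m \notin val u).
Proof.
move=> cm; apply/fanP/andP => [[x /[!inE] /norP[xc xm] ->]|[cu mu]].
  by split; rewrite !inE ?eqxx // negb_or eq_sym cm eq_sym.
have [x xc ux] := vertex_other cu; exists x => //.
by move: mu; rewrite ux !inE !negb_or xc => /andP[_]; rewrite eq_sym.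
Qed.

Lemma card_star c m : c != m -> #|star c m| = n - 2.
Proof.
move=> cm; rewrite card_fan; last exact: star_centred.
have := cardsC [set c; m]; rewrite cards2 cm card_ord => E.
by rewrite -[X in _ = X - 2]E addKn.
Qed.

Lemma star_turn c m m' : c != m -> c != m' ->
  sweep adj (star c m) (star c m') (fun u => u \in star c m').
Proof.
move=> cm cm'; have [<-|mm'] := eqVneq m m'; first exact: sweep_refl.
apply: sweep_weaken (sweep_move _) _ => [|u]; last by right.
exists (kedge cm'), (kedge cm); split.
- by rewrite mem_star //= !inE eqxx !negb_or (eq_sym m) cm.
- by rewrite mem_star //= !inE !eqxx orbT andbF.
- by apply: (@adj_share _ _ _ c m' m); rewrite // eq_sym.
- apply/setP=> u; rewrite in_setU1 in_setD1 !mem_star // !vertex_eqE.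
  have [cu|cu] := boolP (c \in val u); last first.
    by rewrite andbF orbF; apply/esym/negbTE; apply: contra cu => /eqP->; rewrite !inE eqxx.
  have [y yc ->] := vertex_other cu.
  have [mc m'c] : m != c /\ m' != c by rewrite !(eq_sym _ c).
  rewrite /= ![[set c; _]]setUC !pair_eqr // !inE (negbTE mc) (negbTE m'c) !orbF.
  have [->|ym] := eqVneq y m; first by rewrite eq_sym mm'.
  by rewrite andbT eq_sym.
- exact/fan_gp/star_centred.
Qed.

Lemma fan_recentre_seq X f g (s : seq 'I_n) : centred X f -> g \notin X ->
  {in X, forall x, f x != g} ->
  sweep adj (fan X f) (fan X (fun x => if x \in s then g else f x)) (fun _ => False).
Proof.
move=> cXf gX fg; elim: s => [|l s IH].
  rewrite [X in sweep _ _ X _](eq_fan (f' := f)) //.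
  exact: sweep_weaken (sweep_refl _ _) _.
set fs := fun x => _ in IH.
have cXfs : centred X fs by move=> x xX; rewrite /fs; case: ifP => _; last exact: cXf.
have [/andP[lX ls]|lXs] := boolP ((l \in X) && (l \notin s)); last first.
  rewrite negb_and negbK in lXs; rewrite [X in sweep _ _ X _](eq_fan (f' := fs)) // => x xX.
  rewrite /fs in_cons; case: eqVneq => //= xl.
  by move: lXs; rewrite -xl xX /= => ->.
have fsl : g != fs l by rewrite /fs (negbTE ls) eq_sym fg.
rewrite [X in sweep _ _ X _](eq_fan (f' := fun y => if y == l then g else fs y)).
  have mv := fan_recentre cXfs lX gX fsl.
  by apply: sweep_weaken (sweep_trans IH (sweep_move mv)) _ => u [].
by move=> x _; rewrite /fs in_cons; case: eqP.
Qed.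

Lemma star_swap c d : c != d -> sweep adj (star c d) (star d c) (fun u => u \in star d c).
Proof.
move=> cd; have dX : d \notin ~: [set c; d] by rewrite !inE eqxx orbT.
have := fan_recentre_seq (enum (~: [set c; d])) (@star_centred c d) dX (fun _ _ => cd).
rewrite [X in sweep _ _ X _](eq_fan (f' := fun _ => d)) => [sw|x]; last first.
  by rewrite mem_enum => ->.
rewrite /star [[set d; c]]setUC.
by apply: sweep_weaken (sweep_trans sw (sweep_refl _ _)) _ => u; right.
Qed.

Lemma star_loop c d v m : c != d -> v != c -> m \notin [:: v; c] ->
  sweep adj (star c d) (star c d) (fun u => v \in val u).
Proof.
move=> cd vc; rewrite !inE negb_or => /andP[mv mc].
have [cv vm] : c != v /\ v != m by split; rewrite eq_sym.
have := sweep_trans (star_turn cd cv) (sweep_trans (star_swap cv)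
  (sweep_trans (star_turn vc vm) (sweep_trans (star_turn vm vc)
  (sweep_trans (star_swap vc) (star_turn cv cd))))).
move/sweep_weaken; apply=> u vu; have [y yv uy] := vertex_other vu.
have [yc|yc] := eqVneq y c.
  by do 2 right; left; rewrite mem_star // uy yc !inE !negb_or eqxx mv mc.
by right; left; rewrite mem_star // uy !inE !negb_or eqxx cv (eq_sym c) yc.
Qed.

Lemma LKn_mobile_star : 2 < n -> exists S, mobile_gp_set adj S /\ #|S| = n - 2.
Proof.
move=> n3; pose c := Ordinal (ltnW (ltnW n3)); pose d := Ordinal (ltnW n3).
have cd : c != d by [].
exists (star c d); split; last exact: card_star.
have: sweep adj (star c d) (star c d) (fun u => exists v, (v != c) && (v \in val u)).
  apply: (sweep_loops (P := fun v u => (v != c) && (v \in val u))) => v.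
  have [->|vc] := eqVneq v c; first by apply: sweep_weaken (sweep_refl _ _) _ => u.
  have [m mvc] : exists m, m \notin [:: v; c] by apply: exists_fresh; rewrite card_ord.
  by apply: sweep_weaken (star_loop cd vc mvc) _ => u /andP[].
case=> s [ls _ cover]; split; first exact/fan_gp/star_centred.
exists s; split=> // u; apply: cover.
have [a [b [ab ->]]] := vertex_pair u; have [ac|ac] := eqVneq a c.
  by exists b; rewrite !inE eqxx orbT -ac eq_sym ab.
by exists a; rewrite !inE eqxx ac.
Qed.

End Fans.

Section UpperBound.

Variable n : nat.
Local Notation V := (LKn_vertex n).
Local Notation adj := (@LKn_adj n).
Implicit Types (a b c d x y : 'I_n) (u v w : V) (S : {set V}).

Lemma has_edge_moved S u v a b :
  has_edge S a b -> val u != [set a; b] -> has_edge (v |: (S :\ u)) a b.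
Proof.
case/has_edgeP=> w wS wab uab; apply/has_edgeP; exists w => //.
by apply/setU1P; right; rewrite in_setD1 wS andbT; apply: contra_neq uab => <-.
Qed.

Lemma has_edge_arrived S u v a b : val v = [set a; b] -> has_edge (v |: (S :\ u)) a b.
Proof. by move=> vab; apply/has_edgeP; exists v; rewrite ?setU11. Qed.

Definition triangle S a b c := [&& has_edge S a b, has_edge S b c & has_edge S c a].

Definition triangle_free S := forall a b c, uniq [:: a; b; c] -> ~~ triangle S a b c.

Lemma triangle_rot S a b c : triangle S a b c = triangle S b c a.
Proof. by rewrite /triangle andbC -andbA. Qed.

(* The robot on the edge [p]--[q] of a triangle [pqr] moving to an edge
   [p]--[x] creates the path [x]-[p]-[r]-[q]. *)
Lemma move_off_triangle S v w p q r : w \in S -> v \notin S ->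
  gp_set adj (v |: (S :\ w)) -> val w = [set p; q] -> p \in val v ->
  p != q -> p != r -> q != r -> has_edge S q r -> has_edge S r p -> False.
Proof.
move=> wS vS gp' wp pv pq pr qr qr_in /[dup] rp_in /has_edgeP[g gS grp].
have [x xp vx] := vertex_other pv.
have [xq xr] : x != q /\ x != r.
  split; apply: contraNneq vS => x_eq; [have -> : v = w | have -> : v = g] => //;
    by apply/val_inj; rewrite vx ?wp ?grp x_eq // setUC.
have [qp rp] : q != p /\ r != p by rewrite !(eq_sym _ p).
apply: (gp_set_P4_free gp' (_ : uniq [:: x; p; r; q])).
- by rewrite /= !inE !negb_or xp xr xq pr pq eq_sym qr.
- by apply: has_edge_arrived; rewrite vx setUC.
- apply: has_edge_moved; first by rewrite has_edgeC.
  by rewrite wp ![[set p; _]]setUC pair_eqr // qr.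
- apply: has_edge_moved; first by rewrite has_edgeC.
  by rewrite wp pair_eqr // eq_sym.
Qed.

Lemma triangle_edge_stays S S' a b c : legal_move adj S S' ->
  uniq [:: a; b; c] -> triangle S a b c -> has_edge S' a b.
Proof.
move=> [u [v [uS vS uv -> gp']]] abc /and3P[/has_edgeP[w wS wab] bc ca].
have [wu|wu] := eqVneq w u; last first.
  by apply: has_edge_moved; [apply/has_edgeP; exists w | rewrite -wab -vertex_eqE eq_sym].
subst u; have [ab ac bc'] : [/\ a != b, a != c & b != c].
  by move: abc; rewrite /= !inE !negb_or => /and3P[/andP[-> ->] ->].
exfalso; case/andP: uv => _ /set0Pn[z /setIP[]]; rewrite wab !inE => /orP[]/eqP-> zv.
  exact: (move_off_triangle wS vS gp' wab zv ab ac bc').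
by apply: (@move_off_triangle S v w b a c wS vS gp');
  rewrite 1?setUC // 1?eq_sym // has_edgeC.
Qed.

Lemma triangle_legal_move S S' a b c : legal_move adj S S' ->
  uniq [:: a; b; c] -> triangle S a b c -> triangle S' a b c.
Proof.
move=> mv abc t; apply/and3P; split; first exact: triangle_edge_stays mv abc t.
  apply: (triangle_edge_stays mv (c := a)); last by rewrite -triangle_rot.
  by rewrite -(rot_uniq 1) in abc.
apply: (triangle_edge_stays mv (c := b)); last by rewrite -2!triangle_rot.
by rewrite -(rot_uniq 2) in abc.
Qed.

Hypothesis n_gt3 : 3 < n.

Lemma mobile_triangle_free S : mobile_gp_set adj S -> triangle_free S.
Proof.
move=> [gp [s [ls cover]]] a b c abc; apply/negP => t.
have [d dabc] : exists d, d \notin [:: a; b; c] by apply: exists_fresh; rewrite card_ord.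
have da : d != a by apply: contraNneq dabc => ->; rewrite inE eqxx.
have [C Cs dC] := cover (kedge da).
have gpC := legal_seq_gp_set ls gp Cs.
have tC : triangle C a b c.
  apply: (legal_seq_inv (P := fun C => triangle C a b c) _ ls t Cs) => S1 S2 mv.
  exact: triangle_legal_move.
case/and3P: tC => ab bc _.
apply: (gp_set_P4_free gpC (_ : uniq [:: d; a; b; c])) ab bc.
  by rewrite cons_uniq dabc.
by apply/has_edgeP; exists (kedge da).
Qed.

Definition deg S a := #|[set u in S | a \in val u]|.

Lemma sum_card_setI S (A : {set 'I_n}) :
  \sum_(u in S) #|val u :&: A| = \sum_(a in A) deg S a.
Proof.
have cardE u : #|val u :&: A| = \sum_(a in A) (a \in val u).
  rewrite -sum1_card big_mkcond [RHS]big_mkcond; apply: eq_bigr => a _.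
  by rewrite inE; case: (a \in val u); case: (a \in A).
rewrite (eq_bigr _ (fun u _ => cardE u)) exchange_big; apply: eq_bigr => a _.
rewrite /deg -sum1_card big_mkcond [RHS]big_mkcond; apply: eq_bigr => u _.
by rewrite inE; case: (u \in S); case: (a \in val u).
Qed.

Lemma second_edge S u a : u \in S -> a \in val u -> deg S a != 1 ->
  exists2 w, w \in S & (w != u) && (a \in val w).
Proof.
move=> uS au; rewrite /deg (cardsD1 u) inE uS au add1n eqSS -lt0n.
by case/card_gt0P=> w /[!inE] /and3P[wu wS aw]; exists w; rewrite ?wu.
Qed.

Lemma leaf_endpoint S u : gp_set adj S -> triangle_free S -> u \in S ->
  exists2 a, a \in val u & deg S a = 1.
Proof.
move=> gp tf uS; have [a [b [ab uab]]] := vertex_pair u.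
have [au bu] : a \in val u /\ b \in val u by rewrite uab !inE !eqxx orbT.
have [da|/(second_edge uS au)[w1 w1S /andP[w1u aw1]]] := eqVneq (deg S a) 1.
  by exists a.
have [db|/(second_edge uS bu)[w2 w2S /andP[w2u bw2]]] := eqVneq (deg S b) 1.
  by exists b.
have [x xa w1x] := vertex_other aw1; have [y yb w2y] := vertex_other bw2.
have xb : x != b by apply: contraNneq w1u => xb; rewrite vertex_eqE w1x uab xb.
have ya : y != a by apply: contraNneq w2u => ya; rewrite vertex_eqE w2y uab ya setUC.
have [e_ab e_ax e_by] : [/\ has_edge S a b, has_edge S a x & has_edge S b y].
  by split; apply/has_edgeP; [exists u | exists w1 | exists w2].
exfalso; have [xy|xy] := eqVneq x y.
  have abx : uniq [:: a; b; x] by rewrite /= !inE !negb_or ab (eq_sym a) xa (eq_sym b) xb.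
  by case/negP: (tf _ _ _ abx); rewrite /triangle e_ab xy e_by has_edgeC -xy e_ax.
apply: (gp_set_P4_free gp (_ : uniq [:: x; a; b; y])) e_ab e_by; last by rewrite has_edgeC.
by rewrite /= !inE !negb_or xa xb xy ab (eq_sym a) ya (eq_sym b) yb.
Qed.

Lemma triangle_free_hub S : gp_set adj S -> triangle_free S -> n - 2 < #|S| ->
  exists c, n - 1 <= deg S c.
Proof.
move=> gp tf big; pose L : {set 'I_n} := [set a | deg S a == 1].
have sum_L : \sum_(a in L) deg S a = #|L|.
  by rewrite -sum1_card; apply: eq_bigr => a /[!inE] /eqP.
have S_le_L : #|S| <= #|L|.
  rewrite -sum_L -sum_card_setI -sum1_card; apply: leq_sum => u uS.
  have [a au da] := leaf_endpoint gp tf uS.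
  by apply/card_gt0P; exists a; rewrite !inE au da eqxx.
have handshake : \sum_(a in [set: 'I_n]) deg S a = #|S| * 2.
  rewrite -sum_card_setI -sum_nat_const.
  by apply: eq_bigr => u _; rewrite setIT card_vertex.
rewrite (big_setID L) setTI setTD sum_L in handshake.
change (#|L| + \sum_(a in ~: L) deg S a = #|S| * 2) in handshake.
have := cardsC L; rewrite card_ord => cardL; clearbody L.
have k_le1 : #|~: L| <= 1 by lia.
have /cards1P[c Lc] : #|~: L| == 1.
  rewrite eqn_leq k_le1 lt0n; apply/eqP => /cards0_eq L0.
  by move: handshake cardL; rewrite L0 big_set0 cards0 !addn0; lia.
by exists c; move: handshake cardL; rewrite Lc big_set1 cards1; lia.
Qed.

Lemma hub_edges S c x : n - 1 <= deg S c -> x != c -> has_edge S c x.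
Proof.
move=> hub xc; apply: contraTT hub => no_cx; rewrite -ltnNge.
have sub : [set u in S | c \in val u] \subset star c x.
  apply/subsetP=> u /setIdP[uS cu]; rewrite mem_star 1?eq_sym // cu /=.
  apply: contra no_cx => xu; apply/has_edgeP; exists u => //.
  by apply: vertex_eq_pair; rewrite // eq_sym.
by apply: leq_ltn_trans (subset_leq_card sub) _; rewrite card_star 1?eq_sym //; lia.
Qed.

Lemma hub_in_all_edges S c : gp_set adj S -> (forall x, x != c -> has_edge S c x) ->
  forall u, u \in S -> c \in val u.
Proof.
move=> gp full u uS; apply/negPn/negP => cu.
have [a [b [ab uab]]] := vertex_pair u.
have [d dabc] : exists d, d \notin [:: a; b; c] by apply: exists_fresh; rewrite card_ord.
move: cu dabc; rewrite uab !inE !negb_or => /andP[ca cb] /and3P[da db dc].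
apply: (gp_set_P4_free gp (_ : uniq [:: d; c; a; b])).
- by rewrite /= !inE !negb_or da db dc ca cb ab.
- by rewrite has_edgeC full.
- by rewrite full // eq_sym.
- by apply/has_edgeP; exists u.
Qed.

Lemma hub_no_legal_move S S' c : gp_set adj S -> (forall x, x != c -> has_edge S c x) ->
  ~ legal_move adj S S'.
Proof.
move=> gp full [u [v [uS vS uv -> gp']]].
have [l lc ucl] := vertex_other (hub_in_all_edges gp full uS).
have cv : c \notin val v.
  apply/negP=> /vertex_other[x xc vcx]; case/has_edgeP: (full x xc) => w wS wcx.
  by move: vS; rewrite (_ : v = w) ?wS //; apply/val_inj; rewrite vcx wcx.
have lv : l \in val v.
  case/andP: uv => _ /set0Pn[z /setIP[]]; rewrite ucl !inE => /orP[]/eqP-> zv //.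
  by rewrite zv in cv.
have [x xl vlx] := vertex_other lv.
have xc : x != c by apply: contraNneq cv => <-; rewrite vlx !inE eqxx orbT.
have [y ycl] : exists y, y \notin [:: c; l; x] by apply: exists_fresh; rewrite card_ord.
move: ycl; rewrite !inE !negb_or => /and3P[yc yl yx].
apply: (gp_set_P4_free gp' (_ : uniq [:: l; x; c; y])).
- by rewrite /= !inE !negb_or (eq_sym l) xl lc (eq_sym l) yl xc (eq_sym x) yx (eq_sym c) yc.
- exact: has_edge_arrived.
- apply: has_edge_moved; first by rewrite has_edgeC full.
  by rewrite ucl setUC pair_neq // !inE negb_or (eq_sym l) xl lc.
- apply: has_edge_moved; first by rewrite full // eq_sym.
  by rewrite ucl setUC pair_neq // !inE negb_or lc (eq_sym l) yl.
Qed.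

Lemma mobile_card_le S : mobile_gp_set adj S -> #|S| <= n - 2.
Proof.
move=> mob; rewrite leqNgt; apply/negP => big; have [gp _] := mob.
have [c hub] := triangle_free_hub gp (mobile_triangle_free mob) big.
have full x : x != c -> has_edge S c x by exact: hub_edges.
have frozen := mobile_frozen mob (fun S' => hub_no_legal_move (S' := S') gp full).
have [a ac] : exists a, a \notin [:: c].
  by apply: exists_fresh; rewrite card_ord; apply: leq_trans n_gt3.
have [b bca] : exists b, b \notin [:: c; a].
  by apply: exists_fresh; rewrite card_ord; apply: leq_trans n_gt3.
move: ac bca; rewrite !inE !negb_or => ac /andP[bc ba].
have := hub_in_all_edges gp full (frozen (kedge ba)).
by rewrite !inE (eq_sym c) (negbTE bc) (eq_sym c) (negbTE ac).
Qed.

End UpperBound.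

Theorem theorem3p2 (n : nat) : 4 <= n -> mob_eq (@LKn_adj n) (n - 2).
Proof.
move=> n_gt3; split; first exact: LKn_mobile_star (ltnW n_gt3).
by move=> S; apply: mobile_card_le.
Qed.
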